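(* Let $D\ge 3$ and let $G$ be an $n$-vertex graph satisfying properties (C1) and (C3). Let $H=\mathrm{Co}_2(G)$. Then: (i) if $v\in V(H)$, then $\deg_H(v)\ge \deg_G(v)-2$; (ii) if $v\in V(H)\cap S_G(D)$, then $\deg_H(v)\ge\deg_G(v)-1$; (iii) if $\deg_G(v)\ge 3$, then $v\in V(H)$.
   Context: $S_G(D)$ is the set of vertices of $G$ of degree at most $D$. $\mathrm{Co}_2(G)$ is the unique maximal subgraph of $G$ with minimum degree at least $2$. Property (C1): for every set $R\subseteq V(G)$ with $|R|\le 100$ such that $G[R]$ is connected, $|R\cap S_G(D)|\le 2$. Property (C3): $G$ has no connected component with $k$ vertices for any $k\in[3,n/2]$. *)

From mathcomp Require Import all_boot.
Set Implicit Arguments. Unset Strict Implicit. Unset Printing Implicit Defensive.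

(* A simple graph on a finite vertex type T: symmetric irreflexive relation e. *)

Definition nbr_in (T : finType) (e : rel T) (U : {set T}) (v : T) : {set T} :=
  [set u in U | e v u].

Definition deg (T : finType) (e : rel T) (v : T) : nat := #|[set u | e v u]|.

Definition S_G (T : finType) (e : rel T) (D : nat) : {set T} :=
  [set v | deg e v <= D].

Definition mindeg2 (T : finType) (e : rel T) (U : {set T}) : bool :=
  [forall v in U, 2 <= #|nbr_in e U v|].

(* vertex set of Co_2(G): union of all vertex sets inducing min degree >= 2.
   Co_2(G) is the subgraph of G induced on this set. *)
Definition Co2 (T : finType) (e : rel T) : {set T} :=
  \bigcup_(U : {set T} | mindeg2 e U) U.

Definition deg_Co2 (T : finType) (e : rel T) (v : T) : nat :=
  #|nbr_in e (Co2 e) v|.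

Definition connected_in (T : finType) (e : rel T) (R : {set T}) : Prop :=
  forall x y, x \in R -> y \in R ->
    connect [rel a b | [&& e a b, a \in R & b \in R]] x y.

Definition C1 (T : finType) (e : rel T) (D : nat) : Prop :=
  forall R : {set T}, #|R| <= 100 -> connected_in e R ->
    #|R :&: S_G e D| <= 2.

Definition component (T : finType) (e : rel T) (v : T) : {set T} :=
  [set u | connect e v u].

Definition C3 (T : finType) (e : rel T) : Prop :=
  forall v : T, ~ (3 <= #|component e v| /\ 2 * #|component e v| <= #|T|).

(* A vertex v together with any set A of its neighbours spans a connected star, so
   by (C1) at most two vertices of the star have degree at most D (stars of more
   than 100 vertices are handled through a sub-star of size 3).  Hence a vertex of
   degree at least 3 has at least two neighbours of degree at least 3 (it has at most one
   low neighbour if it is low itself, and degree > D >= 3 otherwise), and the set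
   of such vertices induces minimum degree 2: it lies in Co_2(G), giving (iii).
   Consequently every neighbour of v outside Co_2(G) has degree at most 2 <= D,
   so there are at most two of them, and at most one when v itself lies in S_G(D);
   this is (i) and (ii). *)

From mathcomp Require Import all_boot zify.

Set Implicit Arguments.
Unset Strict Implicit.
Unset Printing Implicit Defensive.

Lemma mindeg2_sub_Co2 (T : finType) (e : rel T) (U : {set T}) :
  mindeg2 e U -> U \subset Co2 e.
Proof. exact: (bigcup_sup U). Qed.

Lemma deg_split (T : finType) (e : rel T) (U : {set T}) v :
  deg e v = #|nbr_in e U v| + #|[set u | e v u] :\: U|.
Proof.
rewrite /deg -(cardsID U); congr (_ + _).
by apply: eq_card => u; rewrite !inE andbC.
Qed.

Section LowDegreeNeighbours.
Variables (T : finType) (e : rel T).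
Hypothesis sym_e : symmetric e.

Lemma connected_in_star v (A : {set T}) :
  A \subset [set u | e v u] -> connected_in e (v |: A).
Proof.
move=> AN; set r := [rel a b | [&& e a b, a \in v |: A & b \in v |: A]].
have sym_r : symmetric r.
  by move=> a b /=; rewrite sym_e; case: (a \in _); case: (b \in _); rewrite ?andbF.
have from_v x : x \in v |: A -> connect r v x.
  rewrite in_setU1 => /orP [/eqP -> // | xA]; apply: connect1.
  have := subsetP AN x xA; rewrite inE /= => ->.
  by rewrite setU11 in_setU1 xA orbT.
move=> x y /from_v vx /from_v vy.
by apply: connect_trans vy; rewrite sym_connect_sym.
Qed.

Variables (D : nat).
Hypotheses (irr_e : irreflexive e) (C1_e : C1 e D).

Lemma card_low_nbrs_small v (A : {set T}) :
  A \subset [set u | e v u] :&: S_G e D -> #|A| <= 99 ->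
  #|A| + (v \in S_G e D) <= 2.
Proof.
rewrite subsetI => /andP [AN AS] A99.
have vA : v \notin A by apply/negP => /(subsetP AN); rewrite inE irr_e.
have cardR : #|v |: A| = #|A|.+1 by rewrite cardsU1 vA.
have R100 : #|v |: A| <= 100 by rewrite cardR.
apply: (leq_trans _ (C1_e R100 (connected_in_star AN))).
case vS: (v \in S_G e D).
  by rewrite addn1 -cardR subset_leq_card // subsetI subxx subUset sub1set vS AS.
by rewrite addn0 subset_leq_card // subsetI subsetU1 AS.
Qed.

Lemma card_low_nbrs v (A : {set T}) :
  A \subset [set u | e v u] :&: S_G e D -> #|A| + (v \in S_G e D) <= 2.
Proof.
move=> AL; rewrite leqNgt; apply/negP => big.
have : 3 - (v \in S_G e D) <= #|A| by lia.
case/card_geqP => s [uniq_s size_s sA].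
have BA : [set x in s] \subset A by apply/subsetP => x; rewrite inE => /sA.
have cardB : #|[set x in s]| = 3 - (v \in S_G e D).
  by rewrite cardsE (card_uniqP uniq_s).
have := card_low_nbrs_small (subset_trans BA AL); rewrite cardB; lia.
Qed.

Hypothesis D_ge3 : 3 <= D.

Lemma mindeg2_high_deg : mindeg2 e [set x | 3 <= deg e x].
Proof.
apply/forall_inP => v; rewrite inE => dv.
pose N := [set u | e v u].
have low := card_low_nbrs (subxx (N :&: S_G e D)).
have lowC : N :\: S_G e D \subset nbr_in e [set x | 3 <= deg e x] v.
  by apply/subsetP => u; rewrite !inE => /andP [uS ->]; rewrite andbT; lia.
have := subset_leq_card lowC; have := cardsID (S_G e D) N.
move: low; rewrite inE /deg -/N in dv *; case: (leqP #|N| D) => /= ND; lia.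
Qed.

Lemma high_deg_in_Co2 v : 3 <= deg e v -> v \in Co2 e.
Proof.
by move=> dv; apply: (subsetP (mindeg2_sub_Co2 mindeg2_high_deg)); rewrite inE.
Qed.

Lemma card_nbrs_outside_Co2 v :
  #|[set u | e v u] :\: Co2 e| + (v \in S_G e D) <= 2.
Proof.
apply: card_low_nbrs; rewrite subsetI subsetDl; apply/subsetP => u.
rewrite !inE => /andP [uC _].
have : deg e u < 3 by rewrite ltnNge; apply: contra uC; exact: high_deg_in_Co2.
lia.
Qed.

End LowDegreeNeighbours.

Theorem lemma5p1 (T : finType) (e : rel T) (D : nat) :
  symmetric e -> irreflexive e -> 3 <= D ->
  C1 e D -> C3 e ->
  [/\ (forall v, v \in Co2 e -> deg e v - 2 <= deg_Co2 e v),
      (forall v, v \in Co2 e -> v \in S_G e D -> deg e v - 1 <= deg_Co2 e v)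
    & (forall v, 3 <= deg e v -> v \in Co2 e)].
Proof.
move=> sym_e irr_e D3 C1_e _.
have outside := card_nbrs_outside_Co2 sym_e irr_e C1_e D3.
split=> [v _|v _ vS|v]; last exact: (high_deg_in_Co2 sym_e irr_e C1_e D3).
- by have := outside v; rewrite /deg_Co2 (deg_split _ (Co2 e)); lia.
- by have := outside v; rewrite /deg_Co2 vS (deg_split _ (Co2 e)); lia.
Qed.
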